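(* Suppose a node $v$ of degree at least $3$ is deleted from a network and the healing responds by adding new edges (not previously present) only between former neighbors of $v$ such that the added edges form a connected graph on the set of former neighbors of $v$. Then, however the healing edges are chosen, at least one node has degree after the deletion and healing at least $1$ larger than its degree before the deletion.
   Context: Networks are undirected graphs; deleting a node removes it and all its incident edges. *)

From mathcomp Require Import all_boot.
Set Implicit Arguments. Unset Strict Implicit. Unset Printing Implicit Defensive.

Definition simple_graph (T : finType) (e : rel T) : Prop :=
  symmetric e /\ irreflexive e.

Definition nbhd (T : finType) (e : rel T) (v : T) : {set T} := [set y | e v y].

Definition deg (T : finType) (e : rel T) (x : T) : nat := #|[set y | e x y]|.

Definition healing (T : finType) (e : rel T) (v : T) (h : rel T) : Prop :=
  [/\ symmetric h, irreflexive h,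
      (forall x y, h x y -> e v x && e v y),
      (forall x y, h x y -> ~~ e x y) &
      (forall x y, e v x -> e v y -> connect h x y)].

Definition deg_healed (T : finType) (e : rel T) (v : T) (h : rel T) (x : T) : nat :=
  #|[set y | (y != v) && (e x y || h x y)]|.

From mathcomp Require Import all_boot.

(* If every former neighbour of v received at most one healing edge, the
   healing graph would be a matching, whose connected components have at most
   two vertices; since v had at least three neighbours, some neighbour x gains
   two new edges x--b, x--c while losing only the edge to v. *)

Section MatchingComponents.

Context {T : finType} {h : rel T}.
Hypothesis h_sym : symmetric h.

Lemma connect_matching :
  (forall z w1 w2, h z w1 -> h z w2 -> w1 = w2) ->
  forall x y, connect h x y -> x = y \/ h x y.
Proof.
move=> h_match x y /connectP [p]; elim: p x => [|z p IHp] x /=.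
  by move=> _ ->; left.
move=> /andP [hxz hz_p] y_last.
case: (IHp z hz_p y_last) => [<-|hz_last]; first by right.
by left; apply: (h_match z); rewrite // h_sym.
Qed.

Lemma connected_card_gt2_branch (A : {set T}) :
  2 < #|A| -> {in A &, forall x y, connect h x y} ->
  exists x b c, [/\ h x b, h x c & b != c].
Proof.
move=> A_gt2 A_conn.
case: (boolP [exists x, exists b, exists c, [&& h x b, h x c & b != c]]).
  by move=> /existsP [x /existsP [b /existsP [c /and3P [hxb hxc bc]]]]; exists x, b, c.
move=> /existsPn no_branch.
have h_match z w1 w2 : h z w1 -> h z w2 -> w1 = w2.
  move=> hzw1 hzw2; apply/eqP; apply: contraT => w12.
  by move: (no_branch z) => /existsPn/(_ w1)/existsPn/(_ w2); rewrite hzw1 hzw2 w12.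
have [a [b [c [[aA bA cA] [ab bc ca]]]]] := card_gt2P A_gt2.
have [a_eq_b|hab] := connect_matching h_match _ _ (A_conn _ _ aA bA).
  by rewrite a_eq_b eqxx in ab.
have [a_eq_c|hac] := connect_matching h_match _ _ (A_conn _ _ aA cA).
  by rewrite a_eq_c eqxx in ca.
by rewrite (h_match _ _ _ hab hac) eqxx in bc.
Qed.

End MatchingComponents.

Lemma deg_healed_gain (T : finType) (e h : rel T) (v x b c : T) :
  e x v -> h x b -> h x c -> b != c -> ~~ e x b -> ~~ e x c ->
  deg e x + 1 <= deg_healed e v h x.
Proof.
move=> exv hxb hxc bc exb exc.
have bv : b != v by apply: contraNneq exb => ->.
have cv : c != v by apply: contraNneq exc => ->.
set S := [set y | e x y].
have gained : (S :\ v) :|: [set b; c] \subset [set y | (y != v) && (e x y || h x y)].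
  apply/subsetP => y; rewrite !inE => /orP [/andP [-> ->] //|/orP [] /eqP ->].
    by rewrite bv hxb orbT.
  by rewrite cv hxc orbT.
apply: leq_trans (subset_leq_card gained).
have disjoint_new : (S :\ v) :&: [set b; c] = set0.
  apply/setP => y; rewrite !inE.
  by apply/negbTE/andP => [[/andP [_ exy] /orP [] /eqP E]]; move: exy; rewrite E ?(negbTE exb) ?(negbTE exc).
rewrite cardsU disjoint_new cards0 subn0 cards2 bc /deg -/S (cardsD1 v S) inE exv.
by rewrite add1n addn1 addn2.
Qed.

Theorem lemma11 (T : finType) (e : rel T) (v : T) (h : rel T) :
  simple_graph e -> 3 <= deg e v -> healing e v h ->
  exists x : T, x != v /\ deg e x + 1 <= deg_healed e v h x.
Proof.
move=> [e_sym e_irr] deg_v [h_sym _ h_nbhd h_new h_conn].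
have nbhd_conn : {in nbhd e v &, forall x y, connect h x y}.
  by move=> x y; rewrite !inE; apply: h_conn.
have [x [b [c [hxb hxc bc]]]] := connected_card_gt2_branch h_sym (nbhd e v) deg_v nbhd_conn.
have evx : e v x by case/andP: (h_nbhd _ _ hxb).
exists x; split; first by apply: contraTneq evx => ->; rewrite e_irr.
by apply: deg_healed_gain hxb hxc bc (h_new _ _ hxb) (h_new _ _ hxc); rewrite e_sym.
Qed.
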